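(* Let $K$ be a number field, $a_1,a_2,e\ge 0$ integers, and let $X$ be the smooth surface of bidegree $(e,2)$ in $\mathbb{F}(0,a_1,a_2)$ cut out by $Q_{(s,t)}(\mathbf{x}) = \sum_{0\le i,j\le 2} f_{i,j}(s,t)x_ix_j$ with $f_{i,j}=f_{j,i}\in\mathcal{O}_K[s,t]$ binary forms of degree $a_i+a_j+e$ ($a_0=0$), with conic bundle $\pi:(s:t;\mathbf{x})\mapsto(s:t)$ and $\Delta(s,t) = -4\det(f_{i,j}(s,t))$, and assume $t \nmid \Delta(s,t)$. Let $p$ be a closed point of $\mathbb{P}^1_K$ with singular fibre $X_p$, with associated $\theta_p$ and $\delta_p$ as in the context. Then $\delta_p(\theta_p,1) \neq 0$, and the fibre $X_p$ is split over $K(p)$ if and only if $\delta_p(\theta_p,1)$ is a square in $K(p)$.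
   Context: Closed points $p$ with singular fibre correspond to irreducible factors $\Delta_p(s,t) \in \mathcal{O}_K[s,t]$ of $\Delta(s,t)$ (up to constants), with $\Delta_p(1,0)\neq 0$; the residue field $K(p)$ is generated over $K$ by a root $\theta_p \in \overline{K}$ of $\Delta_p(s,1)$. The plane conic $C_{(\theta_p,1)}: Q_{(\theta_p,1)}(\mathbf{x}) = 0$ over $K(p)$ is isomorphic to $X_p$ and is singular, with a unique singular point; let $i_p \in \{0,1,2\}$ be the index of the first nonzero coordinate of that point. Then $\delta_p(s,t) \in \mathcal{O}_K[s,t]$ is the discriminant of the binary quadratic form in the two remaining variables obtained by setting $x_{i_p} = 0$ in $Q_{(s,t)}(x_0,x_1,x_2)$, where the discriminant of $\alpha y^2 + \beta yz + \gamma z^2$ is $\beta^2 - 4\alpha\gamma$. A conic over a field is split if it is smooth or is a union of two lines defined over that field. $\mathbb{F}(0,a_1,a_2)$ is the $\mathbb{P}^2$-bundle $\mathbb{P}(\mathcal{O}\oplus\mathcal{O}(a_1)\oplus\mathcal{O}(a_2))$ over $\mathbb{P}^1$, with bidegree conventions so that $f_{i,j}$ has degree $a_i+a_j+e$. *)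

From HB Require Import structures.
From mathcomp Require Import all_boot all_order all_algebra all_field.
From mathcomp Require Import mpoly.
Set Implicit Arguments. Unset Strict Implicit. Unset Printing Implicit Defensive.
Import GRing.Theory.
Local Open Scope ring_scope.

Definition adeg (a1 a2 : nat) (i : 'I_3) : nat :=
  match val i with 0 => 0 | 1 => a1 | _ => a2 end%N.

(* x is an algebraic integer (element of O_K) *)
Definition is_integral (K : fieldType) (x : K) : Prop :=
  exists q : {poly int}, q \is monic /\ root (map_poly (fun z : int => z%:~R) q) x.

Definition Delta (K : fieldType) (f : 'I_3 -> 'I_3 -> {mpoly K[2]}) : {mpoly K[2]} :=
  - 4%:R * \det (\matrix_(i, j) f i j).

Definition pt2 (R : nzRingType) (s t : R) : 'I_2 -> R :=
  fun i => if val i == 0%N then s else t.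

Definition dehom (K : fieldType) (F : {mpoly K[2]}) : {poly K} :=
  (map_mpoly (fun c : K => c%:P) F).@[pt2 'X 1].

Definition evalE (K : fieldType) (E : fieldExtType K) (F : {mpoly K[2]}) (s t : E) : E :=
  (map_mpoly (in_alg E) F).@[pt2 s t].

(* the total polynomial Q_(s,t)(x) in the Cox coordinates (s,t,x0,x1,x2) *)
Definition QX (K : fieldType) (f : 'I_3 -> 'I_3 -> {mpoly K[2]}) : {mpoly K[5]} :=
  \sum_(i < 3) \sum_(j < 3)
     (f i j \mPo [tuple 'X_(inord 0) ; 'X_(inord 1)]) * 'X_(inord (2 + i)) * 'X_(inord (2 + j)).

(* smoothness of X in F(0,a1,a2) (Jacobian criterion on the Cox cover, over
   every finite extension E of K, i.e. over the algebraic closure) *)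
Definition smooth_surface (K : fieldType) (f : 'I_3 -> 'I_3 -> {mpoly K[2]}) : Prop :=
  forall (E : fieldExtType K) (w : 'I_5 -> E),
    (w (inord 0) != 0 \/ w (inord 1) != 0) ->
    (w (inord 2) != 0 \/ w (inord 3) != 0 \/ w (inord 4) != 0) ->
    (map_mpoly (in_alg E) (QX f)).@[w] = 0 ->
    exists i : 'I_5, (map_mpoly (in_alg E) (mderiv i (QX f))).@[w] != 0.

Definition Qform (E : fieldType) (c : 'I_3 -> 'I_3 -> E) : {mpoly E[3]} :=
  \sum_(i < 3) \sum_(j < 3) c i j *: ('X_i * 'X_j).

Definition linform (E : fieldType) (l : 'I_3 -> E) : {mpoly E[3]} :=
  \sum_(i < 3) l i *: 'X_i.

Definition conic_sing_pt (E : fieldType) (c : 'I_3 -> 'I_3 -> E) (v : 'I_3 -> E) : Prop :=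
  (exists i : 'I_3, v i != 0) /\ (Qform c).@[v] = 0 /\ forall i : 'I_3, (mderiv i (Qform c)).@[v] = 0.

Definition smooth_conic (E : fieldType) (c : 'I_3 -> 'I_3 -> E) : Prop :=
  forall v : 'I_3 -> E, ~ conic_sing_pt c v.

Definition split_over (K : fieldType) (E : fieldExtType K) (F : {subfield E})
    (c : 'I_3 -> 'I_3 -> E) : Prop :=
  smooth_conic c \/
  exists l1 l2 : 'I_3 -> E,
    (forall i, l1 i \in F) /\ (forall i, l2 i \in F) /\
    Qform c = linform l1 * linform l2.

Definition first_nz (E : fieldType) (v : 'I_3 -> E) : 'I_3 :=
  if v ord0 != 0 then ord0 else if v (inord 1) != 0 then inord 1 else inord 2.

(* the two remaining indices j < k once x_i is set to 0 *)
Definition rest1 (i : 'I_3) : 'I_3 := if val i == 0%N then inord 1 else ord0.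
Definition rest2 (i : 'I_3) : 'I_3 := if val i == 2%N then inord 1 else inord 2.

(* delta_p(s,t): discriminant beta^2 - 4 alpha gamma of
   alpha y^2 + beta y z + gamma z^2 := Q_(s,t)(x) with x_i = 0, y = x_j, z = x_k *)
Definition delta (K : fieldType) (f : 'I_3 -> 'I_3 -> {mpoly K[2]}) (i : 'I_3) : {mpoly K[2]} :=
  let j := rest1 i in let k := rest2 i in
  (f j k + f k j) ^+ 2 - 4%:R * f j j * f k k.

(* At the closed point p the symmetric matrix c = (f_ij(theta,1)) of
   the fibre conic is singular, and the singular point v lies in its kernel.
   Smoothness of X forces this kernel to be a line: a second kernel vector would
   give, over a quadratic extension, a kernel vector x with x^T (d_s c) x = 0, and
   then (theta, 1, x) would be a singular point of X (the t-derivative vanishes by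
   Euler's identity).  Hence the 2x2 minor of c complementary to i = i_p is
   invertible, and delta_p(theta,1) = -4 * minor <> 0.  Normalising v_i = 1,
   Cramer's rule puts v in K(p)^3, and in the coordinates x_j - v_j x_i,
   x_k - v_k x_i the form Q becomes the binary form obtained by setting x_i = 0,
   whose discriminant is delta_p(theta,1).  A binary quadratic form in
   characteristic 0 splits over a field iff its discriminant is a square there. *)

From HB Require Import structures.
From mathcomp Require Import all_boot all_order all_algebra all_field.
From mathcomp Require Import mpoly.
From mathcomp Require Import ring.
From Stdlib Require Import Classical.
Import GRing.Theory.
Local Open Scope ring_scope.
Set Implicit Arguments. Unset Strict Implicit. Unset Printing Implicit Defensive.

Lemma ord3_rest (i : 'I_3) :
  [\/ [/\ i = inord 0, rest1 i = inord 1 & rest2 i = inord 2],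
      [/\ i = inord 1, rest1 i = inord 0 & rest2 i = inord 2] |
      [/\ i = inord 2, rest1 i = inord 0 & rest2 i = inord 1]].
Proof.
have vi k : (k < 3)%N -> val (inord k : 'I_3) = k by move=> /inordK.
rewrite /rest1 /rest2; case: i => -[|[|[|//]]] ?;
  [constructor 1 | constructor 2 | constructor 3];
  by split; apply: val_inj; rewrite /= ?vi.
Qed.

Lemma rest_neq (i : 'I_3) :
  [/\ rest1 i != i, rest2 i != i & rest2 i != rest1 i].
Proof.
by case: (ord3_rest i) => -[-> -> ->]; split; apply/eqP => /(congr1 val);
  rewrite /= !inordK.
Qed.

Lemma ord3_restP (i a : 'I_3) : [\/ a = i, a = rest1 i | a = rest2 i].
Proof.
case: (ord3_rest i) => -[-> -> ->]; case: (ord3_rest a) => -[-> _ _];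
  by [constructor 1 | constructor 2 | constructor 3].
Qed.

Lemma big_ord2 (R : nmodType) (F : 'I_2 -> R) : \sum_i F i = F (inord 0) + F (inord 1).
Proof.
rewrite !big_ord_recr big_ord0 /= add0r.
by congr (_ + _); congr F; apply: val_inj; rewrite /= inordK.
Qed.

Lemma big_ord3_rest (R : nmodType) (i : 'I_3) (F : 'I_3 -> R) :
  \sum_a F a = F i + F (rest1 i) + F (rest2 i).
Proof.
have -> : \sum_a F a = F (inord 0) + F (inord 1) + F (inord 2).
  rewrite !big_ord_recr big_ord0 /= add0r.
  by congr (_ + _ + _); congr F; apply: val_inj; rewrite /= inordK.
case: (ord3_rest i) => -[-> -> ->] //; first by rewrite [F (inord 1) + _]addrC.
by rewrite addrC addrA.
Qed.

Lemma first_nz_neq0 (E : fieldType) (v : 'I_3 -> E) :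
  (exists i, v i != 0) -> v (first_nz v) != 0.
Proof.
move=> [i vi0]; rewrite /first_nz; case: ifP => // /negbFE /eqP v0.
case: ifP => // /negbFE /eqP v1; apply: contraNneq vi0 => v2.
have e0 : ord0 = inord 0 :> 'I_3 by apply: val_inj; rewrite /= inordK.
by apply/eqP; case: (ord3_rest i) => -[-> _ _]; rewrite -?e0.
Qed.

Section BilinearForm.
Variables (R : comNzRingType) (n : nat) (c : 'I_n -> 'I_n -> R).

Definition bilin (x y : 'I_n -> R) : R := \sum_a \sum_b c a b * x a * y b.

Definition in_ker (x : 'I_n -> R) : Prop := forall a, \sum_b c a b * x b = 0.

Lemma bilinE x y : bilin x y = \sum_a x a * \sum_b c a b * y b.
Proof.
apply: eq_bigr => a _; rewrite mulr_sumr; apply: eq_bigr => b _.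
by rewrite mulrCA mulrA.
Qed.

Lemma bilin_kerr x y : in_ker y -> bilin x y = 0.
Proof. by move=> ky; rewrite bilinE big1 // => a _; rewrite ky mulr0. Qed.

Lemma in_kerZ x k : in_ker x -> in_ker (fun a => x a * k).
Proof.
move=> kx a; under eq_bigr => b _ do rewrite mulrA.
by rewrite -mulr_suml kx mul0r.
Qed.

Hypothesis c_sym : forall a b, c a b = c b a.

Lemma bilinC x y : bilin x y = bilin y x.
Proof.
rewrite /bilin exchange_big; apply: eq_bigr => a _; apply: eq_bigr => b _.
by rewrite c_sym mulrAC.
Qed.

Lemma bilin_kerl x y : in_ker x -> bilin x y = 0.
Proof. by move=> kx; rewrite bilinC bilin_kerr. Qed.

Lemma bilin_comb (al be : R) u v :
  let x a := al * u a + be * v a in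
  bilin x x = al ^+ 2 * bilin u u + al * be * (bilin u v + bilin v u)
              + be ^+ 2 * bilin v v.
Proof.
rewrite /bilin mulrDr !mulr_sumr -!big_split; apply: eq_bigr => a _.
rewrite !mulr_sumr -!big_split; apply: eq_bigr => b _ /=; ring.
Qed.

End BilinearForm.

Lemma eq_bilin (R : comNzRingType) n (c1 c2 : 'I_n -> 'I_n -> R) x y :
  c1 =2 c2 -> bilin c1 x y = bilin c2 x y.
Proof. by move=> e12; apply: eq_bigr => a _; apply: eq_bigr => b _; rewrite e12. Qed.

Lemma bilin_lincomb (R : comNzRingType) n (c1 c2 : 'I_n -> 'I_n -> R) (p q : R) x y :
  bilin (fun a b => p * c1 a b + q * c2 a b) x y = p * bilin c1 x y + q * bilin c2 x y.
Proof.
rewrite /bilin !mulr_sumr -big_split; apply: eq_bigr => a _.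
by rewrite !mulr_sumr -big_split; apply: eq_bigr => b _ /=; ring.
Qed.

Lemma bilin_weighted (R : comNzRingType) n (c : 'I_n -> 'I_n -> R) (g : 'I_n -> R) r x :
  bilin (fun a b => (g a + g b + r) * c a b) x x =
  bilin c (fun a => g a * x a) x + bilin c x (fun b => g b * x b) + r * bilin c x x.
Proof.
rewrite /bilin mulr_sumr -!big_split; apply: eq_bigr => a _.
by rewrite mulr_sumr -!big_split; apply: eq_bigr => b _ /=; ring.
Qed.

Lemma rmorph_bilin (R S : comNzRingType) n (phi : {rmorphism R -> S})
    (c : 'I_n -> 'I_n -> R) x y :
  phi (bilin c x y) = bilin (fun a b => phi (c a b)) (phi \o x) (phi \o y).
Proof.
rewrite rmorph_sum; apply: eq_bigr => a _; rewrite rmorph_sum.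
by apply: eq_bigr => b _; rewrite !rmorphM.
Qed.

Lemma ker_rest (R : comNzRingType) (c : 'I_3 -> 'I_3 -> R) (i : 'I_3) v u :
  (forall a b, c a b = c b a) -> in_ker c v -> GRing.lreg (v i) ->
  \sum_b c (rest1 i) b * u b = 0 -> \sum_b c (rest2 i) b * u b = 0 ->
  in_ker c u.
Proof.
move=> c_sym kv vi_reg kj kk.
have ki : \sum_b c i b * u b = 0.
  apply: vi_reg; rewrite mulr0.
  have := bilin_kerl c_sym u kv; rewrite bilinE (big_ord3_rest i) kj kk.
  by rewrite !mulr0 !addr0.
by move=> a; case: (ord3_restP i a) => ->.
Qed.

Section PlaneConic.
Variables (E : fieldType) (c : 'I_3 -> 'I_3 -> E).

Lemma Qform_meval x : (Qform c).@[x] = bilin c x x.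
Proof.
rewrite /Qform raddf_sum; apply: eq_bigr => a _; rewrite raddf_sum.
by apply: eq_bigr => b _; rewrite /= mevalZ mevalM !mevalXU mulrA.
Qed.

Lemma linform_meval (l x : 'I_3 -> E) : (linform l).@[x] = \sum_a l a * x a.
Proof. by rewrite raddf_sum; apply: eq_bigr => a _; rewrite /= mevalZ mevalXU. Qed.

Lemma mderivXU_meval n (i a : 'I_n) (x : 'I_n -> E) :
  (mderiv i 'X_a).@[x] = (a == i)%:R.
Proof.
rewrite mderivX mnm1E; case: eqP => [->|_]; last by rewrite scale0r meval0.
by rewrite -{1}(add0m U_(i)%MM) addmK mpolyX0 scale1r meval1.
Qed.

Lemma Qform_mderiv_meval x i :
  (mderiv i (Qform c)).@[x] = \sum_b c i b * x b + \sum_a c a i * x a.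
Proof.
pose d (a b : 'I_3) : E := (a == b)%:R.
have sum_d (F : 'I_3 -> E) : \sum_a d a i * F a = F i.
  rewrite (bigD1 i) //= /d eqxx mul1r big1 ?addr0 // => a /negbTE ->.
  by rewrite mul0r.
transitivity (bilin c (d^~ i) x + bilin c x (d^~ i)).
  have mderiv_sum := big_morph _ (@mderivD _ _ i) (@mderiv0 _ _ i).
  have meval_sum := big_morph _ (@mevalD _ _ x) (meval0 x).
  rewrite /Qform mderiv_sum meval_sum -big_split; apply: eq_bigr => a _.
  rewrite mderiv_sum meval_sum -big_split; apply: eq_bigr => b _.
  rewrite mderivZ mderivM mevalZ mevalD !mevalM !mevalXU !mderivXU_meval.
  by rewrite mulrDr !mulrA.
rewrite bilinE sum_d; congr (_ + _); apply: eq_bigr => a _.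
rewrite (bigD1 i) //= /d eqxx mulr1 big1 ?addr0 // => b /negbTE ->.
by rewrite mulr0.
Qed.

Hypothesis c_sym : forall a b, c a b = c b a.

Lemma conic_sing_pt_ker v : (2%:R : E) != 0 -> conic_sing_pt c v -> in_ker c v.
Proof.
move=> two0 [_ [_ dQ]] a; have := dQ a.
rewrite Qform_mderiv_meval [X in _ + X](eq_bigr (fun b => c a b * v b)) => [|b _].
  by rewrite -mulr2n -mulr_natl => /eqP; rewrite mulf_eq0 (negbTE two0) => /eqP.
by rewrite c_sym.
Qed.

End PlaneConic.

Definition rest_minor (R : nzRingType) (c : 'I_3 -> 'I_3 -> R) (i : 'I_3) : R :=
  c (rest1 i) (rest1 i) * c (rest2 i) (rest2 i) - c (rest1 i) (rest2 i) * c (rest2 i) (rest1 i).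

Definition rest_disc (R : nzRingType) (c : 'I_3 -> 'I_3 -> R) (i : 'I_3) : R :=
  (c (rest1 i) (rest2 i) + c (rest2 i) (rest1 i)) ^+ 2
  - 4%:R * c (rest1 i) (rest1 i) * c (rest2 i) (rest2 i).

Lemma rest_disc_sym (R : comNzRingType) (c : 'I_3 -> 'I_3 -> R) i :
  (forall a b, c a b = c b a) -> rest_disc c i = - 4%:R * rest_minor c i.
Proof. by move=> c_sym; rewrite /rest_disc /rest_minor (c_sym (rest2 i)); ring. Qed.

Section RestPoint.
Variables (E : fieldType) (i : 'I_3).
Local Notation j := (rest1 i).
Local Notation k := (rest2 i).

Definition rest_pt (s t : E) : 'I_3 -> E :=
  fun a => if a == j then s else if a == k then t else 0.

Lemma rest_ptE s t : [/\ rest_pt s t i = 0, rest_pt s t j = s & rest_pt s t k = t].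
Proof.
have [ji ki kj] := rest_neq i.
by rewrite /rest_pt eqxx (negbTE kj) eqxx eq_sym (negbTE ji) eq_sym (negbTE ki).
Qed.

Lemma sum_rest_pt (l : 'I_3 -> E) s t : \sum_b l b * rest_pt s t b = l j * s + l k * t.
Proof. by have [pi pj pk] := rest_ptE s t; rewrite (big_ord3_rest i) pi pj pk mulr0 add0r. Qed.

Lemma linform_rest_pt (l : 'I_3 -> E) s t : (linform l).@[rest_pt s t] = l j * s + l k * t.
Proof. by rewrite linform_meval sum_rest_pt. Qed.

Lemma Qform_rest_pt (c : 'I_3 -> 'I_3 -> E) s t :
  (Qform c).@[rest_pt s t] = c j j * s ^+ 2 + (c j k + c k j) * s * t + c k k * t ^+ 2.
Proof.
rewrite Qform_meval bilinE mulrC; under eq_bigr => a _ do rewrite mulrC sum_rest_pt.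
by rewrite sum_rest_pt; ring.
Qed.

End RestPoint.

Section SymmetricKernel.
Variables (E : fieldType) (c : 'I_3 -> 'I_3 -> E) (i : 'I_3).
Hypothesis c_sym : forall a b, c a b = c b a.
Local Notation j := (rest1 i).
Local Notation k := (rest2 i).

Lemma rest_minor_eq0_ker v : in_ker c v -> v i != 0 -> rest_minor c i = 0 ->
  exists2 u, u i = 0 /\ (exists a, u a != 0) & in_ker c u.
Proof.
move=> kv vi0 minor0.
have ker_pt s t : c j j * s + c j k * t = 0 -> c k j * s + c k k * t = 0 ->
    in_ker c (rest_pt i s t).
  by move=> rj rk; apply: (ker_rest c_sym kv (mulfI vi0)); rewrite sum_rest_pt.
have [cjj0|nz_cjj] := eqVneq (c j j) 0.
  have cjk0 : c j k = 0.
    apply/eqP; rewrite -sqrf_eq0 -oppr_eq0; apply/eqP.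
    by rewrite -minor0 /rest_minor cjj0 (c_sym k j); ring.
  have [pi pj _] := rest_ptE i (1 : E) 0.
  exists (rest_pt i 1 0); first by split=> //; exists j; rewrite pj oner_eq0.
  by apply: ker_pt; rewrite ?cjj0 ?(c_sym k j) cjk0; ring.
have [pi _ pk] := rest_ptE i (- c j k) (c j j).
exists (rest_pt i (- c j k) (c j j)); first by split=> //; exists k; rewrite pk.
apply: ker_pt; first ring.
by rewrite -[RHS]minor0 /rest_minor (c_sym k j); ring.
Qed.
End SymmetricKernel.

Section KernelCoordinates.
Variables (E : fieldType) (i : 'I_3) (w : 'I_3 -> E).
Local Notation j := (rest1 i).
Local Notation k := (rest2 i).
Local Notation X := ('X_j - (w j)%:MP * 'X_i : {mpoly E[3]}).
Local Notation Y := ('X_k - (w k)%:MP * 'X_i : {mpoly E[3]}).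

Definition ker_linform (p q : E) : 'I_3 -> E :=
  fun a => if a == i then - (p * w j + q * w k) else if a == j then p else q.

Lemma linform_ker (p q : E) : linform (ker_linform p q) = p%:MP * X + q%:MP * Y.
Proof.
have [ji ki kj] := rest_neq i.
rewrite /linform (big_ord3_rest i) /ker_linform eqxx (negbTE ji) (negbTE ki).
by rewrite eqxx (negbTE kj) -!mul_mpolyC; ring.
Qed.

Variable c : 'I_3 -> 'I_3 -> E.
Hypotheses (c_sym : forall a b, c a b = c b a) (w_ker : in_ker c w) (w_i : w i = 1).

(* Q(x) = Q(x - x_i w) for a kernel vector w of c. *)
Lemma Qform_ker_coords :
  Qform c = (c j j)%:MP * X ^+ 2 + (c j k + c k j)%:MP * X * Y + (c k k)%:MP * Y ^+ 2.
Proof.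
have row a : c a i = - (c a j * w j + c a k * w k).
  have /eqP := w_ker a; rewrite (big_ord3_rest i) w_i mulr1 -addrA addr_eq0.
  by move/eqP.
rewrite /Qform (big_ord3_rest i) !(big_ord3_rest i) -!mul_mpolyC.
rewrite (row i) (c_sym i j) (c_sym i k) (row j) (row k).
by rewrite (c_sym k j); ring.
Qed.

Lemma Qform_ker_factor p1 q1 p2 q2 :
  c j j = p1 * p2 -> c j k + c k j = p1 * q2 + q1 * p2 -> c k k = q1 * q2 ->
  Qform c = linform (ker_linform p1 q1) * linform (ker_linform p2 q2).
Proof.
move=> ejj ejk ekk; rewrite Qform_ker_coords !linform_ker ejj ejk ekk.
by ring.
Qed.

End KernelCoordinates.

Lemma binary_form_disc (R : comNzRingType) (A B C p1 q1 p2 q2 : R) :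
  (forall s t, A * s ^+ 2 + B * s * t + C * t ^+ 2 = (p1 * s + q1 * t) * (p2 * s + q2 * t)) ->
  B ^+ 2 - 4%:R * A * C = (p1 * q2 - q1 * p2) ^+ 2.
Proof.
move=> fact.
have eA : A = p1 * p2.
  by transitivity (A * 1 ^+ 2 + B * 1 * 0 + C * 0 ^+ 2); [ring | rewrite fact; ring].
have eC : C = q1 * q2.
  by transitivity (A * 0 ^+ 2 + B * 0 * 1 + C * 1 ^+ 2); [ring | rewrite fact; ring].
have eB : B = p1 * q2 + q1 * p2.
  transitivity ((A * 1 ^+ 2 + B * 1 * 1 + C * 1 ^+ 2) - A - C); first ring.
  by rewrite fact eA eC; ring.
by rewrite eA eB eC; ring.
Qed.

Section SubfieldArithmetic.
Variables (K : fieldType) (E : fieldExtType K) (F : {subfield E}).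

Lemma cramer2_mem (a b c d r s x y : E) :
  a * d - b * c != 0 -> [/\ a \in F, b \in F, c \in F & d \in F] ->
  r \in F -> s \in F -> a * x + b * y = r -> c * x + d * y = s -> x \in F /\ y \in F.
Proof.
move=> det0 [aF bF cF dF] rF sF ex ey.
have -> : x = (r * d - b * s) / (a * d - b * c).
  by apply: (mulIf det0); rewrite divfK // -ex -ey; ring.
have -> : y = (a * s - r * c) / (a * d - b * c).
  by apply: (mulIf det0); rewrite divfK // -ex -ey; ring.
by split; rewrite rpredM ?rpredV ?rpredB ?rpredM.
Qed.

Lemma binary_form_split (A B C y : E) :
  (2%:R : E) != 0 -> [/\ A \in F, B \in F & C \in F] -> y \in F ->
  y ^+ 2 = B ^+ 2 - 4%:R * A * C ->
  exists p1 q1 p2 q2, [/\ p1 \in F, q1 \in F, p2 \in F & q2 \in F] /\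
    [/\ A = p1 * p2, B = p1 * q2 + q1 * p2 & C = q1 * q2].
Proof.
move=> two0 [AF BF CF] yF disc.
have [A0|nzA] := eqVneq A 0.
  exists 0, 1, B, C; split; first by rewrite rpred0 rpred1.
  by split; rewrite ?A0 ?mul0r ?add0r ?mul1r.
have four0 : (4%:R : E) != 0 by rewrite (natrM _ 2 2) mulf_neq0.
(* 4A (A X^2 + B XY + C Y^2) = (2A X + (B + y) Y) (2A X + (B - y) Y) *)
exists (2%:R * A), (B + y), (2%:R^-1), ((B - y) / (4%:R * A)).
split; first by split; rewrite ?(rpredM, rpredV, rpredD, rpredB, rpredN, rpred1, AF, BF, yF).
split.
- by field.
- by field; rewrite two0 nzA four0.
- have -> : (B + y) * ((B - y) / (4%:R * A)) = (B ^+ 2 - y ^+ 2) / (4%:R * A) by ring.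
  by rewrite disc; field; rewrite nzA four0.
Qed.

End SubfieldArithmetic.

Lemma Qform_factor_disc (E : fieldType) (c : 'I_3 -> 'I_3 -> E) i (l1 l2 : 'I_3 -> E) :
  Qform c = linform l1 * linform l2 ->
  rest_disc c i = (l1 (rest1 i) * l2 (rest2 i) - l1 (rest2 i) * l2 (rest1 i)) ^+ 2.
Proof.
move=> Q_fact; apply: binary_form_disc => s t.
by rewrite -Qform_rest_pt Q_fact mevalM !linform_rest_pt.
Qed.

Section ConicSplitting.
Variables (K : fieldType) (E : fieldExtType K) (F : {subfield E}).
Variables (c : 'I_3 -> 'I_3 -> E) (i : 'I_3).
Hypotheses (c_sym : forall a b, c a b = c b a) (cF : forall a b, c a b \in F).
Local Notation j := (rest1 i).
Local Notation k := (rest2 i).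

Lemma ker_linform_mem (w : 'I_3 -> E) p q a :
  w j \in F -> w k \in F -> p \in F -> q \in F -> ker_linform i w p q a \in F.
Proof.
move=> wjF wkF pF qF; rewrite /ker_linform.
by case: ifP => _; [rewrite rpredN rpredD ?rpredM | case: ifP].
Qed.

Lemma Qform_split_of_disc v y : (2%:R : E) != 0 ->
  in_ker c v -> v i != 0 -> rest_minor c i != 0 -> y \in F -> y ^+ 2 = rest_disc c i ->
  exists l1 l2, (forall a, l1 a \in F) /\ (forall a, l2 a \in F) /\
    Qform c = linform l1 * linform l2.
Proof.
move=> two0 v_ker vi0 minor0 yF y_sq.
pose w a := v a * (v i)^-1.
have w_ker : in_ker c w := in_kerZ _ v_ker.
have wi : w i = 1 by rewrite /w divff.
have row a : c a j * w j + c a k * w k = - c a i.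
  have /eqP := w_ker a; rewrite (big_ord3_rest i) wi mulr1 -addrA addrC addr_eq0.
  by move/eqP.
have cNF a b : - c a b \in F by rewrite rpredN.
have [wjF wkF] := cramer2_mem minor0 (And4 (cF j j) (cF j k) (cF k j) (cF k k))
  (cNF j i) (cNF k i) (row j) (row k).
have [p1 [q1 [p2 [q2 [[p1F q1F p2F q2F] [ejj ejk ekk]]]]]] :=
  binary_form_split two0 (And3 (cF j j) (rpredD (cF j k) (cF k j)) (cF k k)) yF y_sq.
exists (ker_linform i w p1 q1), (ker_linform i w p2 q2).
split; [|split]; try by move=> a; apply: ker_linform_mem.
by apply: (Qform_ker_factor c_sym w_ker wi); [exact: ejj | exact: ejk | exact: ekk].
Qed.

End ConicSplitting.

Section LineRestriction.
Variables (L : fieldType) (n : nat) (w u : 'I_n -> L).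

Definition line_poly (j : 'I_n) : {poly L} := (w j)%:P + (u j)%:P * 'X.

(* [restr_line P] is the polynomial t |-> P(w + t u). *)
Definition restr_line (P : {mpoly L[n]}) : {poly L} := (map_mpoly polyC P).@[line_poly].

Lemma line_poly0 j : (line_poly j).[0] = w j /\ (line_poly j)^`().[0] = u j.
Proof.
rewrite /line_poly derivD derivC add0r derivM derivC derivX mul0r add0r mulr1.
by rewrite !(hornerD, hornerM, hornerC, hornerX) mulr0 addr0.
Qed.

Let first_order P := (restr_line P).[0] = P.@[w] /\
  (restr_line P)^`().[0] = \sum_i u i * (mderiv i P).@[w].

Lemma restr_lineD P Q : restr_line (P + Q) = restr_line P + restr_line Q.
Proof. by rewrite /restr_line !raddfD. Qed.

Lemma restr_lineM P Q : restr_line (P * Q) = restr_line P * restr_line Q.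
Proof. by rewrite /restr_line !rmorphM. Qed.

Let first_orderD P Q : first_order P -> first_order Q -> first_order (P + Q).
Proof.
rewrite /first_order restr_lineD; move: (restr_line P) (restr_line Q) => p q.
rewrite derivD !hornerD => -[-> ->] [-> ->].
rewrite mevalD -big_split; split=> //; apply: eq_bigr => i _ /=.
by rewrite mderivD mevalD mulrDr.
Qed.

Let first_orderM P Q : first_order P -> first_order Q -> first_order (P * Q).
Proof.
rewrite /first_order restr_lineM; move: (restr_line P) (restr_line Q) => p q.
rewrite derivM !(hornerD, hornerM) => -[-> ->] [-> ->]; rewrite mevalM; split=> //.
rewrite mulr_suml mulr_sumr -big_split; apply: eq_bigr => i _ /=.
by rewrite mderivM mevalD !mevalM; ring.
Qed.

Let first_orderC c : first_order c%:MP.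
Proof.
rewrite /first_order /restr_line map_mpolyC !mevalC hornerC derivC horner0.
by split=> //; rewrite big1 // => i _; rewrite mderivC meval0 mulr0.
Qed.

Let first_orderX j : first_order 'X_j.
Proof.
rewrite /first_order /restr_line map_mpolyX !mevalXU; have [-> ->] := line_poly0 j.
split=> //; rewrite (bigD1 j) //= big1 ?addr0 => [|i ij].
  by rewrite mderivXU_meval eqxx mulr1.
by rewrite mderivXU_meval eq_sym (negbTE ij) mulr0.
Qed.

Lemma restr_line_first_order P :
  (restr_line P).[0] = P.@[w] /\
  (restr_line P)^`().[0] = \sum_i u i * (mderiv i P).@[w].
Proof.
have first_order1 : first_order 1 by rewrite -(mpolyC1 n L); apply: first_orderC.
elim/mpolyind: P => [|c m p _ _ IH]; first by rewrite -(mpolyC0 n L); apply: first_orderC.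
apply: first_orderD => //; rewrite -mul_mpolyC; apply: first_orderM; first exact: first_orderC.
rewrite mpolyXE_id; apply: (big_ind first_order) => // i _.
elim: (m i) => [|k IHk]; first by rewrite expr0.
by rewrite exprS; exact: first_orderM (first_orderX i) IHk.
Qed.

End LineRestriction.

Lemma restr_line_homog (L : fieldType) n (F : {mpoly L[n]}) d (w : 'I_n -> L) :
  F \is d.-homog -> restr_line w w F = ('X + 1) ^+ d * (F.@[w])%:P.
Proof.
move=> /dhomogP F_hom; rewrite /restr_line {1}(mpolyE F).
rewrite (big_morph (map_mpoly polyC) (raddfD _) (raddf0 _)).
rewrite (big_morph (meval (line_poly w w)) (raddfD _) (raddf0 _)).
rewrite [F.@[w]]mevalE rmorph_sum mulr_sumr; apply: eq_big_seq => m m_supp.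
rewrite map_mpolyZ map_mpolyX mevalZ mevalX rmorphM rmorph_prod /=.
have line_ww i : line_poly w w i = ('X + 1) * (w i)%:P by rewrite /line_poly; ring.
under eq_bigr => i _ do rewrite line_ww exprMn.
rewrite big_split /= prodrXr -mdegE F_hom // mulrCA; congr (_ * (_ * _)).
by apply: eq_bigr => i _; rewrite rmorphXn.
Qed.

Lemma mpoly_euler (L : fieldType) n (F : {mpoly L[n]}) d (w : 'I_n -> L) :
  F \is d.-homog -> \sum_i w i * (mderiv i F).@[w] = d%:R * F.@[w].
Proof.
move=> F_hom; have [_ <-] := restr_line_first_order w w F.
rewrite (restr_line_homog _ F_hom) derivM derivC mulr0 addr0 deriv_exp derivD derivX derivC addr0.
rewrite !(hornerM, hornerC, hornerMn, horner_exp, hornerD, hornerX).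
by rewrite add0r expr1n !mulr1 mulr_natl.
Qed.

Section MapMpoly.
Variables (n : nat) (R S : comNzRingType).

Lemma map_mpoly_comp_fun (T : comNzRingType) (phi : {rmorphism R -> S})
    (psi : {rmorphism S -> T}) (p : {mpoly R[n]}) :
  map_mpoly psi (map_mpoly phi p) = map_mpoly (psi \o phi) p.
Proof. by apply/mpolyP => m; rewrite !mcoeff_map_mpoly. Qed.

Lemma rmorph_meval (phi : {rmorphism R -> S}) (p : {mpoly R[n]}) (v : 'I_n -> R) :
  phi p.@[v] = (map_mpoly phi p).@[phi \o v].
Proof.
elim/mpolyind: p => [|c m p _ _ IH]; first by rewrite !raddf0.
rewrite !raddfD /= IH mevalZ map_mpolyZ mevalZ map_mpolyX !mevalX rmorphM rmorph_prod.
by congr (_ * _ + _); apply: eq_bigr => i _; rewrite rmorphXn.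
Qed.

Lemma map_mpoly_mderiv (phi : {rmorphism R -> S}) (p : {mpoly R[n]}) i :
  map_mpoly phi (mderiv i p) = mderiv i (map_mpoly phi p).
Proof. by apply/mpolyP => m; rewrite mcoeff_map_mpoly !mcoeff_deriv mcoeff_map_mpoly raddfMn. Qed.

Lemma map_mpoly_homog (phi : {rmorphism R -> S}) d (p : {mpoly R[n]}) :
  p \is d.-homog -> map_mpoly phi p \is d.-homog.
Proof.
move=> /dhomogP p_hom; apply/dhomogP => m; rewrite mcoeff_msupp mcoeff_map_mpoly => m_supp.
apply: p_hom; rewrite mcoeff_msupp; apply: contraNN m_supp => /eqP ->.
by rewrite raddf0.
Qed.

End MapMpoly.

Lemma pt2_inord0 (R : nzRingType) (s t : R) : pt2 s t (inord 0) = s.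
Proof. by rewrite /pt2 /= inordK. Qed.

Lemma pt2_inord1 (R : nzRingType) (s t : R) : pt2 s t (inord 1) = t.
Proof. by rewrite /pt2 /= inordK. Qed.

Section EvalE.
Variables (K : fieldType) (E : fieldExtType K).

Lemma evalE_euler (F : {mpoly K[2]}) d (s t : E) : F \is d.-homog ->
  s * evalE (mderiv (inord 0) F) s t + t * evalE (mderiv (inord 1) F) s t = d%:R * evalE F s t.
Proof.
move=> /(map_mpoly_homog (in_alg E)) /(mpoly_euler (pt2 s t)) <-.
by rewrite big_ord2 /evalE !map_mpoly_mderiv pt2_inord0 pt2_inord1.
Qed.

Lemma evalE_rmorph (L : fieldExtType K) (iota : {rmorphism E -> L}) (F : {mpoly K[2]}) (s t : E) :
  (forall k, iota (in_alg E k) = in_alg L k) ->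
  evalE F (iota s) (iota t) = iota (evalE F s t).
Proof.
move=> iotaK; rewrite /evalE rmorph_meval map_mpoly_comp_fun.
have -> : map_mpoly (iota \o in_alg E) F = map_mpoly (in_alg L) F.
  by apply/mpolyP => m; rewrite !mcoeff_map_mpoly /= iotaK.
by apply: meval_eq => i; rewrite /pt2 /=; case: ifP.
Qed.

Lemma evalE_mem (F : {mpoly K[2]}) (th : E) : evalE F th 1 \in <<1; th>>%VS.
Proof.
rewrite /evalE mevalE rpred_sum // => m _.
rewrite rpredM ?mcoeff_map_mpoly ?rpredZ ?mem1v // rpred_prod // => i _.
by rewrite rpredX // /pt2; case: ifP => _; rewrite ?memv_adjoin ?mem1v.
Qed.

End EvalE.

Lemma natr_ext_neq0 (K : fieldExtType rat) (E : fieldExtType K) n : (n.+1%:R : E) != 0.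
Proof.
rewrite -(rmorph_nat (in_alg E)) fmorph_eq0 -(rmorph_nat (in_alg K)) fmorph_eq0.
by rewrite Num.Theory.pnatr_eq0.
Qed.

Lemma evalE_delta (K : fieldType) (E : fieldExtType K) (f : 'I_3 -> 'I_3 -> {mpoly K[2]}) i
    (s t : E) :
  evalE (delta f i) s t = rest_disc (fun a b => evalE (f a b) s t) i.
Proof.
by rewrite /evalE /delta /rest_disc !(rmorphB, rmorphM, rmorphXn, rmorphD, rmorph_nat) /=; ring.
Qed.

Definition st_part (T : Type) (w : 'I_5 -> T) : 'I_2 -> T := fun i => w (inord i).
Definition x_part (T : Type) (w : 'I_5 -> T) : 'I_3 -> T := fun a => w (inord (2 + a)).

Definition cox_pt (R : nzRingType) (th : R) (x : 'I_3 -> R) : 'I_5 -> R :=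
  fun k => match val k with 0%N => th | 1%N => 1 | j.+2 => x (inord j) end.

Lemma st_part_cox (R : nzRingType) (th : R) x : st_part (cox_pt th x) =1 pt2 th 1.
Proof. by case=> -[|[|//]] ?; rewrite /st_part /cox_pt /pt2 /= inordK. Qed.

Lemma x_part_cox (R : nzRingType) (th : R) x : x_part (cox_pt th x) =1 x.
Proof.
move=> a; rewrite /x_part /cox_pt.
have -> : val (inord (2 + a) : 'I_5) = (2 + a)%N by apply: inordK; case: a => -[|[|[|//]]].
by rewrite /= inord_val.
Qed.

Lemma QX_meval (K : fieldType) (S : comNzRingType) (phi : {rmorphism K -> S})
    (f : 'I_3 -> 'I_3 -> {mpoly K[2]}) (w : 'I_5 -> S) : injective phi ->
  (map_mpoly phi (QX f)).@[w] =
  \sum_a \sum_b (map_mpoly phi (f a b)).@[st_part w] * x_part w a * x_part w b.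
Proof.
move=> phi_inj; rewrite /QX (rmorph_sum (map_mpoly phi)) (rmorph_sum (meval w)).
apply: eq_bigr => a _; rewrite (rmorph_sum (map_mpoly phi)) (rmorph_sum (meval w)).
apply: eq_bigr => b _.
rewrite !rmorphM /= !map_mpolyX !mevalXU map_mpoly_comp // comp_mpoly_meval.
congr (_ * _ * _); apply: meval_eq => i; rewrite tnth_map /=.
by case: i => -[|[|//]] ?; rewrite map_mpolyX mevalXU.
Qed.

Section ConicBundle.
Variables (K : fieldType) (f : 'I_3 -> 'I_3 -> {mpoly K[2]}) (L : fieldExtType K).

Lemma restr_line_QX (w u : 'I_5 -> L) :
  restr_line w u (map_mpoly (in_alg L) (QX f)) =
  \sum_a \sum_b restr_line (st_part w) (st_part u) (map_mpoly (in_alg L) (f a b))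
                * line_poly w u (inord (2 + a)) * line_poly w u (inord (2 + b)).
Proof.
rewrite /restr_line map_mpoly_comp_fun QX_meval; last first.
  by apply: inj_comp; [exact: polyC_inj | exact: fmorph_inj].
by apply: eq_bigr => a _; apply: eq_bigr => b _; rewrite map_mpoly_comp_fun.
Qed.

Variables (th : L) (x : 'I_3 -> L).
Local Notation c := (fun a b => evalE (f a b) th 1).

Lemma QX_cox_pt : (map_mpoly (in_alg L) (QX f)).@[cox_pt th x] = bilin c x x.
Proof.
rewrite QX_meval; last exact: fmorph_inj.
apply: eq_bigr => a _; apply: eq_bigr => b _; rewrite !x_part_cox.
by congr (_ * _ * _); apply: meval_eq; exact: st_part_cox.
Qed.

Lemma QX_cox_pt_dirderiv (u : 'I_5 -> L) :
  \sum_k u k * (mderiv k (map_mpoly (in_alg L) (QX f))).@[cox_pt th x] =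
  bilin (fun a b => \sum_i st_part u i * evalE (mderiv i (f a b)) th 1) x x
  + bilin c (x_part u) x + bilin c x (x_part u).
Proof.
have [_ <-] := restr_line_first_order (cox_pt th x) u (map_mpoly (in_alg L) (QX f)).
rewrite restr_line_QX (big_morph _ (@derivD _) (@deriv0 _)) horner_sum.
rewrite /bilin -!big_split; apply: eq_bigr => a _.
rewrite (big_morph _ (@derivD _) (@deriv0 _)) horner_sum -!big_split.
apply: eq_bigr => b _ /=.
have [Fa0 Fa1] := line_poly0 (cox_pt th x) u (inord (2 + a)).
have [Fb0 Fb1] := line_poly0 (cox_pt th x) u (inord (2 + b)).
have [G0 G1] := restr_line_first_order (st_part (cox_pt th x)) (st_part u)
  (map_mpoly (in_alg L) (f a b)).
move: (restr_line _ _ _) (line_poly _ _ (inord (2 + a))) (line_poly _ _ (inord (2 + b)))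
  G0 G1 Fa0 Fa1 Fb0 Fb1 => G Fa Fb G0 G1 Fa0 Fa1 Fb0 Fb1.
rewrite !derivM !(hornerD, hornerM) G0 G1 Fa0 Fa1 Fb0 Fb1.
have st_cox P : P.@[st_part (cox_pt th x)] = P.@[pt2 th 1] by apply: meval_eq; exact: st_part_cox.
have -> : \sum_i st_part u i * (mderiv i (map_mpoly (in_alg L) (f a b))).@[st_part (cox_pt th x)]
    = \sum_i st_part u i * evalE (mderiv i (f a b)) th 1.
  by apply: eq_bigr => i _; rewrite st_cox /evalE map_mpoly_mderiv.
rewrite st_cox -!/(x_part _ _) !x_part_cox /evalE; ring.
Qed.

End ConicBundle.

Lemma adjoin_root_ext (K : fieldType) (E : fieldExtType K) (p : {poly E}) :
  irreducible_poly p ->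
  exists (L : fieldExtType K) (iota : {rmorphism E -> L}),
    (forall k, iota (in_alg E k) = in_alg L k) /\ exists z, root (map_poly iota p) z.
Proof.
move=> p_irr; have [L0 _ [z z_root _]] := irredp_FAdjoin p_irr.
by exists (baseFieldType L0), (in_alg L0 : {rmorphism E -> baseFieldType L0}); split; last exists z.
Qed.

Lemma binary_form_isotropic_ext (K : fieldType) (E : fieldExtType K) (A B C : E) :
  exists (L : fieldExtType K) (iota : {rmorphism E -> L}),
    (forall k, iota (in_alg E k) = in_alg L k) /\
    exists al be : L, (al != 0 \/ be != 0) /\
      iota A * al ^+ 2 + iota B * (al * be) + iota C * be ^+ 2 = 0.
Proof.
have [A0|nzA] := eqVneq A 0.
  exists E, idfun; split=> //; exists 1, 0; split; first by left; exact: oner_neq0.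
  by rewrite A0 /= expr0n /= !(mul0r, mulr0, addr0).
pose q : {poly E} := A%:P * 'X^2 + B%:P * 'X + C%:P.
have qE r : q.[r] = A * r ^+ 2 + B * r + C.
  by rewrite /q !(hornerD, hornerM, hornerC, hornerX, hornerXn).
have [[r r_root]|no_root] := classic (exists r, root q r).
  exists E, idfun; split=> //; exists r, 1; split; first by right; exact: oner_neq0.
  by move: r_root; rewrite /root qE /= expr1n !mulr1 => /eqP.
have q_irr : irreducible_poly q.
  apply: cubic_irreducible => [|r]; last by apply/negP => r_root; apply: no_root; exists r.
  by rewrite /q -addrA size_polyDl ?size_Cmul // size_polyXn // size_MXaddC;
    case: ifP => _; rewrite ?size_polyC //; case: (B != 0).
have [L [iota [iotaK [z z_root]]]] := adjoin_root_ext q_irr.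
exists L, iota; split=> //; exists z, 1; split; first by right; exact: oner_neq0.
move: z_root; rewrite /root /q !(rmorphD, rmorphM, rmorphXn) /= !map_polyC map_polyX.
by rewrite !(hornerD, hornerM, hornerC, hornerX, hornerXn) expr1n !mulr1 => /eqP.
Qed.

Section SmoothSurface.
Variables (K : fieldType) (a1 a2 e : nat) (f : 'I_3 -> 'I_3 -> {mpoly K[2]}).
Hypotheses (f_sym : forall i j, f i j = f j i)
  (f_hom : forall i j, f i j \is (adeg a1 a2 i + adeg a1 a2 j + e)%N.-homog)
  (X_smooth : smooth_surface f).

(* Otherwise (th, 1, x) is a singular point of X: the x-derivatives of Q vanish as
   c x = 0, the s-derivative is x^T (d_s c) x, and Euler's identity for the f_ab
   turns the t-derivative into a combination of these. *)
Lemma smooth_ker_anisotropic (L : fieldExtType K) (th : L) (x : 'I_3 -> L) :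
  (exists a, x a != 0) -> in_ker (fun a b => evalE (f a b) th 1) x ->
  bilin (fun a b => evalE (mderiv (inord 0) (f a b)) th 1) x x != 0.
Proof.
move=> [a0 xa0] x_ker; apply/negP => /eqP iso.
set c := fun a b => evalE (f a b) th 1 in x_ker.
set cs := fun a b => evalE (mderiv (inord 0) (f a b)) th 1 in iso.
have c_sym a b : c a b = c b a by rewrite /c f_sym.
have [] := @X_smooth L (cox_pt th x).
- by right; rewrite /cox_pt /= inordK // oner_neq0.
- have cox_x j : (j < 3)%N -> cox_pt th x (inord j.+2) = x (inord j).
    by move=> lt_j3; rewrite /cox_pt /= inordK // ltnS ltnS.
  by case: (ord3_rest a0) xa0 => -[-> _ _] ?; [left | right; left | right; right];
    rewrite cox_x.
- by rewrite QX_cox_pt bilin_kerr.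
move=> k; apply/negP; rewrite negbK; apply/eqP.
pose u (k' : 'I_5) : L := (k' == k)%:R.
have := QX_cox_pt_dirderiv f th x u.
rewrite (bigD1 k) //= big1 => [|k' nk]; last by rewrite /u (negbTE nk) mul0r.
rewrite /u eqxx mul1r addr0 map_mpoly_mderiv => ->.
rewrite -/c (bilin_kerr _ x_ker) (bilin_kerl c_sym _ x_ker) !addr0.
pose g a : L := (adeg a1 a2 a)%:R.
have D_eq a b : \sum_i st_part u i * evalE (mderiv i (f a b)) th 1 =
    (st_part u (inord 0) - st_part u (inord 1) * th) * cs a b
    + st_part u (inord 1) * ((g a + g b + e%:R) * c a b).
  have := evalE_euler th 1 (f_hom a b); rewrite mul1r !natrD -/(g a) -/(g b).
  by rewrite big_ord2 -/(c a b) -/(cs a b) => <-; ring.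
rewrite (eq_bilin _ _ D_eq) bilin_lincomb bilin_weighted iso.
by rewrite !(bilin_kerr _ x_ker) (bilin_kerl c_sym _ x_ker) !(mulr0, addr0).
Qed.

Variables (E : fieldExtType K) (theta : E).
Local Notation c := (fun a b => evalE (f a b) theta 1).
Local Notation cs := (fun a b => evalE (mderiv (inord 0) (f a b)) theta 1).

Lemma fibre_ker_rank1 (i : 'I_3) (u v : 'I_3 -> E) :
  in_ker c v -> v i != 0 -> in_ker c u -> u i = 0 -> forall a, u a = 0.
Proof.
move=> v_ker vi0 u_ker ui0 a0; apply/eqP; apply: contraT => ua0.
have [L [iota [iotaK [al [be [albe0 iso]]]]]] := binary_form_isotropic_ext
  (bilin cs u u) (bilin cs u v + bilin cs v u) (bilin cs v v).
have iota_evalE F : evalE F (iota theta) 1 = iota (evalE F theta 1).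
  by rewrite -(rmorph1 iota) evalE_rmorph.
pose x a := al * iota (u a) + be * iota (v a).
have x_nz : exists a, x a != 0.
  have [be0|nz_be] := eqVneq be 0.
    have nz_al : al != 0 by case: albe0; rewrite ?be0 ?eqxx.
    by exists a0; rewrite /x be0 mul0r addr0 mulf_neq0 // fmorph_eq0.
  by exists i; rewrite /x ui0 rmorph0 mulr0 add0r mulf_neq0 // fmorph_eq0.
have x_ker : in_ker (fun a b => evalE (f a b) (iota theta) 1) x.
  move=> a; under eq_bigr => b _ do
    rewrite iota_evalE /x mulrDr (mulrCA _ al) (mulrCA _ be) -!rmorphM.
  rewrite big_split /= -!mulr_sumr -!rmorph_sum.
  by rewrite (u_ker a) (v_ker a) rmorph0 !mulr0 addr0.
have x_iso : bilin (fun a b => evalE (mderiv (inord 0) (f a b)) (iota theta) 1) x x = 0.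
  rewrite (eq_bilin _ _ (fun a b => iota_evalE _)) bilin_comb -!rmorph_bilin -iso.
  by rewrite rmorphD; ring.
by move: (smooth_ker_anisotropic x_nz x_ker); rewrite x_iso eqxx.
Qed.

Hypothesis c_sym : forall a b, c a b = c b a.

Lemma fibre_rest_minor_neq0 (i : 'I_3) (v : 'I_3 -> E) :
  in_ker c v -> v i != 0 -> rest_minor c i != 0.
Proof.
move=> v_ker vi0; apply/eqP => /(rest_minor_eq0_ker c_sym v_ker vi0) [u [ui0 [a ua0]] u_ker].
by move: ua0; rewrite (fibre_ker_rank1 v_ker vi0 u_ker ui0) eqxx.
Qed.

End SmoothSurface.

Theorem lemma4p6
  (K : fieldExtType rat) (a1 a2 e : nat)
  (f : 'I_3 -> 'I_3 -> {mpoly K[2]})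
  (f_sym : forall i j, f i j = f j i)
  (f_hom : forall i j, f i j \is (adeg a1 a2 i + adeg a1 a2 j + e)%N.-homog)
  (f_int : forall i j m, is_integral (f i j)@_m)
  (X_smooth : smooth_surface f)
  (t_ndiv : ~ exists q : {mpoly K[2]}, Delta f = 'X_(inord 1) * q)
  (Dp : {poly K}) (Dp_irr : irreducible_poly Dp) (Dp_dvd : Dp %| dehom (Delta f))
  (E : fieldExtType K) (theta : E) (theta_root : root (map_poly (in_alg E) Dp) theta)
  (v : 'I_3 -> E)
  (v_sing : conic_sing_pt (fun i j => evalE (f i j) theta 1) v) :
  let ip := first_nz v in
  let d := evalE (delta f ip) theta 1 in
  d != 0 /\
  (split_over <<1; theta>>%VS (fun i j => evalE (f i j) theta 1) <->
   exists y : E, y \in <<1; theta>>%VS /\ y ^+ 2 = d).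
Proof.
move=> ip d; have [v_nz _] := v_sing.
set c := fun i j => evalE (f i j) theta 1 in v_sing *.
have c_sym a b : c a b = c b a by rewrite /c f_sym.
have two0 : (2%:R : E) != 0 := natr_ext_neq0 E 1.
have v_ker := conic_sing_pt_ker c_sym two0 v_sing.
have vip0 : v ip != 0 := first_nz_neq0 v_nz.
have minor0 := fibre_rest_minor_neq0 f_sym f_hom X_smooth c_sym v_ker vip0.
have d_disc : d = rest_disc c ip := evalE_delta f ip theta 1.
split; first by rewrite d_disc rest_disc_sym // mulf_neq0 // oppr_eq0 natr_ext_neq0.
split=> [[c_smooth | [l1 [l2 [l1F [l2F Q_fact]]]]] | [y [yF y_sq]]].
- by case: (c_smooth v).
- exists (l1 (rest1 ip) * l2 (rest2 ip) - l1 (rest2 ip) * l2 (rest1 ip)).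
  by rewrite rpredB ?rpredM // d_disc (Qform_factor_disc ip Q_fact).
- right; apply: (Qform_split_of_disc c_sym _ two0 v_ker vip0 minor0 yF).
    by move=> a b; exact: evalE_mem.
  by rewrite -d_disc.
Qed.
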